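(* Let $\alpha,\kappa>0$, $\beta\in\mathbb R$ and $\varepsilon,\nu\geqslant0$. The ordinary differential equation $$\ddot\tau=\frac{2\kappa}{\tau}+\frac{\varepsilon^2}{\tau^3}-\nu\frac{\dot\tau}{\tau^2},\qquad\tau(0)=\alpha,\quad\dot\tau(0)=\beta,$$ has a unique solution $\tau\in C^2(0,\infty)$, and it satisfies, as $t\to\infty$, $\tau(t)\sim 2t\sqrt{\kappa\ln t}$ and $\dot\tau(t)\sim2\sqrt{\kappa\ln t}$. *)

From Stdlib Require Import Reals.
From Coquelicot Require Import Coquelicot.
Open Scope R_scope.

Definition ode_solution (kappa eps nu alpha beta : R) (tau : R -> R) : Prop :=
  (forall t, 0 <= t -> 0 < tau t) /\
  tau 0 = alpha /\
  filterlim (fun h => (tau h - tau 0) / h) (at_right 0) (locally beta) /\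
  filterlim (Derive tau) (at_right 0) (locally beta) /\
  (forall t, 0 < t ->
     ex_derive tau t /\ ex_derive (Derive tau) t /\
     Derive (Derive tau) t =
       2 * kappa / tau t + eps ^ 2 / (tau t) ^ 3 - nu * Derive tau t / (tau t) ^ 2).

From Stdlib Require Import Reals Lra Lia Ranalysis5 Classical.
From Coquelicot Require Import Coquelicot.
Open Scope R_scope.

(* With [v = tau'], the energy [v^2/2 - 2 kappa ln tau + eps^2/(2 tau^2)] is nonincreasing, since
   the friction term only dissipates. This confines every solution to the region
   [tau >= tau_min], [|v| <= speed_ratio * tau], where the equation agrees with a globally
   Lipschitz one: Picard iteration then gives a global solution and a Gronwall estimate
   uniqueness.
   For the asymptotics, [u = v - nu / tau] has [u' = 2 kappa / tau + eps^2 / tau^3 > 0] and is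
   unbounded, so [v] and [tau] tend to infinity. The energy is then bounded on both sides, i.e.
   [v^2 = 4 kappa ln tau + O(1)], so [(tau / sqrt (ln tau))' -> 2 sqrt kappa]. Hence
   [tau ~ 2 sqrt kappa t sqrt (ln tau)], which forces [ln tau ~ ln t]. *)

(** * Monotonicity and one-sided limits *)

Lemma exp_le (x y : R) : x <= y -> exp x <= exp y.
Proof. intros H. destruct (Req_dec x y) as [->|]; [lra|]. apply Rlt_le, exp_increasing; lra. Qed.

Lemma incr_of_derive_nonneg (f df : R -> R) (a : R) :
  (forall x, a < x -> is_derive f x (df x)) -> (forall x, a < x -> 0 <= df x) ->
  forall s t, a < s -> s <= t -> f s <= f t.
Proof.
  intros Hd Hp s t Hs Hst.
  destruct (Req_dec s t) as [->|Hne]; [lra|].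
  destruct (MVT_gen f s t df) as [c [Hc Heq]].
  - intros x Hx. apply Hd. rewrite Rmin_left in Hx by lra. lra.
  - intros x Hx. apply continuity_pt_filterlim, (ex_derive_continuous f x).
    exists (df x). apply Hd. rewrite Rmin_left in Hx by lra. lra.
  - rewrite Rmin_left in Hc by lra. rewrite Rmax_right in Hc by lra.
    assert (0 <= df c) by (apply Hp; lra). nra.
Qed.

Lemma decr_of_derive_nonpos (f df : R -> R) (a : R) :
  (forall x, a < x -> is_derive f x (df x)) -> (forall x, a < x -> df x <= 0) ->
  forall s t, a < s -> s <= t -> f t <= f s.
Proof.
  intros Hd Hp s t Hs Hst.
  enough (- f s <= - f t) by lra.
  apply (incr_of_derive_nonneg (fun x => - f x) (fun x => - df x) a); auto.
  - intros x Hx. exact (is_derive_opp f x (df x) (Hd x Hx)).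
  - intros x Hx. specialize (Hp x Hx). lra.
Qed.

Lemma at_right_pos (a : R) : at_right a (fun t => a < t).
Proof. exists (mkposreal 1 Rlt_0_1). auto. Qed.

Lemma le_of_decr_right_lim (f : R -> R) (l : R) :
  (forall s t, 0 < s -> s <= t -> f t <= f s) ->
  filterlim f (at_right 0) (locally l) -> forall t, 0 < t -> f t <= l.
Proof.
  intros Hdecr Hl t Ht. destruct (Rle_dec (f t) l) as [|Hgt]; auto. exfalso.
  assert (He : 0 < f t - l) by lra.
  assert (Hnear : at_right 0 (fun s => 0 < s < t /\ ball l (mkposreal _ He) (f s))).
  { apply filter_and; [|exact (proj1 (filterlim_locally f l) Hl _)].
    apply filter_and; [apply at_right_pos|].
    exists (mkposreal t Ht). intros s Hs _. change (Rabs (s - 0) < t) in Hs.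
    apply Rabs_def2 in Hs. lra. }
  destruct (Hierarchy.filter_ex _ Hnear) as [s [Hs Hball]].
  specialize (Hdecr s t (proj1 Hs) (Rlt_le _ _ (proj2 Hs))).
  apply Rabs_def2 in Hball. change (minus (f s) l) with (f s - l) in Hball. simpl in Hball. lra.
Qed.

Section FilterlimR.
Context {T : Type} {F : (T -> Prop) -> Prop} {FF : Filter F}.

Lemma filterlim_Rplus (f g : T -> R) (a b : R) :
  filterlim f F (locally a) -> filterlim g F (locally b) ->
  filterlim (fun t => f t + g t) F (locally (a + b)).
Proof.
  intros Hf Hg. apply (filterlim_comp_2 f g plus Hf Hg).
  exact (filterlim_plus (K := R_AbsRing) (V := R_NormedModule) a b).
Qed.

Lemma filterlim_Rmult (f g : T -> R) (a b : R) :
  filterlim f F (locally a) -> filterlim g F (locally b) ->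
  filterlim (fun t => f t * g t) F (locally (a * b)).
Proof.
  intros Hf Hg. apply (filterlim_comp_2 f g mult Hf Hg).
  exact (filterlim_mult (K := R_AbsRing) a b).
Qed.

Lemma filterlim_Rminus (f g : T -> R) (a b : R) :
  filterlim f F (locally a) -> filterlim g F (locally b) ->
  filterlim (fun t => f t - g t) F (locally (a - b)).
Proof.
  intros Hf Hg. apply filterlim_Rplus; auto.
  apply (filterlim_comp _ _ _ g Ropp F (locally b)); auto.
  apply (filterlim_opp (K := R_AbsRing) (V := R_NormedModule) b).
Qed.

Lemma filterlim_continuous_comp (f : T -> R) (g : R -> R) (a : R) :
  filterlim f F (locally a) -> continuous g a -> filterlim (fun t => g (f t)) F (locally (g a)).
Proof. intros Hf Hg. exact (filterlim_comp _ _ _ f g F (locally a) (locally (g a)) Hf Hg). Qed.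

End FilterlimR.

Lemma right_continuous_of_diff_quot (f : R -> R) (l : R) :
  filterlim (fun h => (f h - f 0) / h) (at_right 0) (locally l) ->
  filterlim f (at_right 0) (locally (f 0)).
Proof.
  intros Hq.
  apply (filterlim_ext_loc (fun h => f 0 + h * ((f h - f 0) / h))).
  { apply (filter_imp (fun h => 0 < h)); [|apply at_right_pos]. intros h Hh. field. lra. }
  replace (locally (f 0)) with (locally (f 0 + 0 * l)) by (f_equal; ring).
  apply filterlim_Rplus; [apply filterlim_const|]. apply filterlim_Rmult; auto.
  intros P [d Hd]. exists d. intros h Hh _. apply Hd, Hh.
Qed.

Lemma continuous_at_right (f : R -> R) (a : R) :
  continuous f a -> filterlim f (at_right a) (locally (f a)).
Proof. intros Hc P HP. destruct (Hc P HP) as [d Hd]. exists d. auto. Qed.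

Lemma diff_quot_right_of_is_derive (f : R -> R) (l : R) : is_derive f 0 l ->
  filterlim (fun h => (f h - f 0) / h) (at_right 0) (locally l).
Proof.
  intros H. apply is_derive_Reals in H. apply filterlim_locally. intros e.
  destruct (H e (cond_pos e)) as [d Hd]. exists d. intros y Hy Hy0.
  change (Rabs ((f y - f 0) / y - l) < e). rewrite <- (Rplus_0_l y) at 1.
  apply Hd; [lra|]. change (Rabs (y - 0) < d) in Hy. rewrite Rminus_0_r in Hy. exact Hy.
Qed.

(** * Limits at infinity *)

Lemma is_lim_Rmult (f g : R -> R) (x : Rbar) (a b : R) :
  is_lim f x a -> is_lim g x b -> is_lim (fun t => f t * g t) x (a * b).
Proof. intros Hf Hg. exact (is_lim_mult f g x a b Hf Hg I). Qed.

Lemma is_lim_inv_p_infty (f : R -> R) :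
  is_lim f p_infty p_infty -> is_lim (fun t => / f t) p_infty 0.
Proof. intros Hf. exact (is_lim_inv f p_infty p_infty Hf ltac:(discriminate)). Qed.

Lemma eventually_gt (c : R) : Rbar_locally p_infty (fun t => c < t).
Proof. exists c. auto. Qed.

Lemma eventually_gt_of_is_lim_p_infty (f : R -> R) (c : R) :
  is_lim f p_infty p_infty -> Rbar_locally p_infty (fun t => c < f t).
Proof. intros Hf. apply (Hf (fun y => c < y)). exists c. auto. Qed.

Lemma is_lim_of_abs_sub_le (f g : R -> R) (l : R) :
  Rbar_locally p_infty (fun t => Rabs (f t - l) <= g t) -> is_lim g p_infty 0 ->
  is_lim f p_infty l.
Proof.
  intros Hfg Hg.
  apply (is_lim_le_le_loc (fun t => l - g t) (fun t => l + g t)).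
  - apply (filter_imp _ _ (fun t H => proj1 (Rabs_le_between' _ _ _) H) Hfg).
  - replace (Finite l) with (Finite (l - 0)) by (f_equal; ring).
    apply is_lim_minus'; [apply is_lim_const|exact Hg].
  - replace (Finite l) with (Finite (l + 0)) by (f_equal; ring).
    apply is_lim_plus'; [apply is_lim_const|exact Hg].
Qed.

Lemma mean_value_abs_le (f df : R -> R) (a l e s t : R) :
  (forall x, a < x -> is_derive f x (df x)) -> (forall x, a < x -> Rabs (df x - l) <= e) ->
  a < s -> s <= t -> Rabs (f t - f s - l * (t - s)) <= e * (t - s).
Proof.
  intros Hd Hb Hs Hst.
  destruct (Req_dec s t) as [->|Hne].
  { replace (f t - f t - l * (t - t)) with 0 by ring. rewrite Rabs_R0. lra. }
  destruct (MVT_gen f s t df) as [c [Hc Heq]].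
  - intros x Hx. apply Hd. rewrite Rmin_left in Hx by lra. lra.
  - intros x Hx. apply continuity_pt_filterlim, (ex_derive_continuous f x).
    exists (df x). apply Hd. rewrite Rmin_left in Hx by lra. lra.
  - rewrite Rmin_left, Rmax_right in Hc by lra.
    rewrite Heq. replace (df c * (t - s) - l * (t - s)) with ((df c - l) * (t - s)) by ring.
    rewrite Rabs_mult, (Rabs_pos_eq (t - s)) by lra.
    apply Rmult_le_compat_r; [lra|]. apply Hb. lra.
Qed.

Lemma is_lim_div_id_of_derive (f df : R -> R) (l : R) :
  Rbar_locally p_infty (fun x => is_derive f x (df x)) -> is_lim df p_infty l ->
  is_lim (fun t => f t / t) p_infty l.
Proof.
  intros [a Hd] Hl. apply filterlim_locally. intros [e He]. simpl.
  destruct (proj1 (filterlim_locally df l) Hl (mkposreal (e / 2) ltac:(lra))) as [M HM].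
  set (s := Rmax (Rmax M a) 0 + 1).
  assert (Hs : M < s /\ a < s /\ 0 < s).
  { pose proof (Rmax_l (Rmax M a) 0). pose proof (Rmax_r (Rmax M a) 0).
    pose proof (Rmax_l M a). pose proof (Rmax_r M a). unfold s. lra. }
  assert (Hmv : forall t, s <= t -> Rabs (f t - f s - l * (t - s)) <= e / 2 * (t - s)).
  { intros t Ht. apply (mean_value_abs_le f df (Rmax M a)); auto.
    - intros x Hx. apply Hd. pose proof (Rmax_r M a). lra.
    - intros x Hx. apply Rlt_le, (HM x). pose proof (Rmax_l M a). lra.
    - pose proof (Rmax_l (Rmax M a) 0). unfold s. lra. }
  set (K := Rabs (f s - l * s)).
  exists (Rmax s (2 * K / e)). intros t Ht.
  pose proof (Rmax_l s (2 * K / e)) as Hts. pose proof (Rmax_r s (2 * K / e)) as HtK.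
  change (Rabs (f t / t - l) < e).
  specialize (Hmv t ltac:(lra)).
  replace (f t / t - l) with ((f s - l * s) / t + (f t - f s - l * (t - s)) / t) by (field; lra).
  assert (HK : K / t < e / 2).
  { apply (Rmult_lt_reg_r t); [lra|]. replace (K / t * t) with K by (field; lra).
    apply (Rmult_lt_reg_l (2 / e)); [apply Rdiv_lt_0_compat; lra|].
    replace (2 / e * K) with (2 * K / e) by (field; lra).
    replace (2 / e * (e / 2 * t)) with t by (field; lra). lra. }
  assert (Htail : Rabs ((f t - f s - l * (t - s)) / t) <= e / 2).
  { rewrite Rabs_div, (Rabs_pos_eq t) by lra.
    apply (Rmult_le_reg_r t); [lra|]. replace (Rabs (f t - f s - l * (t - s)) / t * t)
      with (Rabs (f t - f s - l * (t - s))) by (field; lra). nra. }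
  eapply Rle_lt_trans; [apply Rabs_triang|].
  rewrite Rabs_div, (Rabs_pos_eq t) by lra. fold K. lra.
Qed.

(** * Picard iteration for Lipschitz second-order systems *)

Lemma abs_RInt_le_antiderivative (f g Gp : R -> R) (lo hi : R) : lo <= hi ->
  (forall s, continuous f s) -> (forall s, continuous g s) ->
  (forall s, is_derive Gp s (g s)) -> (forall s, lo <= s <= hi -> Rabs (f s) <= g s) ->
  Rabs (RInt f lo hi) <= Gp hi - Gp lo.
Proof.
  intros Hlh Hf Hg HGp Hfg.
  assert (Hint : is_RInt f lo hi (RInt f lo hi)).
  { apply (RInt_correct (V := R_CompleteNormedModule)), ex_RInt_continuous. intros; apply Hf. }
  exact (norm_RInt_le f g lo hi _ _ Hlh Hfg Hint
           (is_RInt_derive Gp g lo hi (fun s _ => HGp s) (fun s _ => Hg s))).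
Qed.

Lemma abs_RInt_le_exp (f : R -> R) (M K t : R) : 0 < K -> 0 <= M ->
  (forall s, continuous f s) -> (forall s, Rabs (f s) <= M * exp (K * Rabs s)) ->
  Rabs (RInt f 0 t) <= M / K * exp (K * Rabs t).
Proof.
  intros HK HM Hf Hb.
  assert (HMK : 0 <= M / K) by (apply Rdiv_le_0_compat; lra).
  destruct (Rle_dec 0 t) as [Ht|Ht].
  - eapply Rle_trans.
    + apply (abs_RInt_le_antiderivative f (fun s => M * exp (K * s)) (fun s => M / K * exp (K * s)));
        auto; intros s.
      * apply (ex_derive_continuous (fun s => M * exp (K * s))). auto_derive. auto.
      * auto_derive; auto. field. lra.
      * intros Hs. rewrite <- (Rabs_pos_eq s) at 2 by lra. apply Hb.
    + rewrite (Rabs_pos_eq t), Rmult_0_r, exp_0 by lra. lra.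
  - rewrite <- opp_RInt_swap by (apply ex_RInt_continuous; intros; apply Hf).
    change (Rabs (- RInt f t 0) <= M / K * exp (K * Rabs t)). rewrite Rabs_Ropp.
    eapply Rle_trans.
    + apply (abs_RInt_le_antiderivative f (fun s => M * exp (- K * s)) (fun s => - (M / K) * exp (- K * s)));
        auto; try lra; intros s.
      * apply (ex_derive_continuous (fun s => M * exp (- K * s))). auto_derive. auto.
      * auto_derive; auto. field. lra.
      * intros Hs. replace (- K * s) with (K * Rabs s) by (rewrite Rabs_left1 by lra; ring). apply Hb.
    + rewrite (Rabs_left t), Rmult_0_r, exp_0 by lra. replace (K * - t) with (- K * t) by ring. lra.
Qed.

Lemma is_derive_plus_RInt (f : R -> R) (c : R) : (forall s, continuous f s) ->
  forall t, is_derive (fun t => c + RInt f 0 t) t (f t).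
Proof.
  intros Hf t.
  assert (H : is_derive (fun t => RInt f 0 t) t (f t)).
  { apply (is_derive_RInt f (fun t => RInt f 0 t) 0 t); [|apply Hf].
    apply filter_forall. intros s.
    apply (RInt_correct (V := R_CompleteNormedModule)), ex_RInt_continuous. intros; apply Hf. }
  replace (f t) with (plus zero (f t)) by (unfold plus, zero; simpl; ring).
  exact (is_derive_plus (fun _ => c) _ t 0 (f t) (is_derive_const c t) H).
Qed.

Lemma pow_half_lt (y : R) : 0 < y -> exists N, forall n, (N <= n)%nat -> (/2)^n < y.
Proof.
  intros Hy. destruct (pow_lt_1_zero (/2)) with y as [N HN]; auto.
  { rewrite Rabs_pos_eq; lra. }
  exists N. intros n Hn. specialize (HN n Hn). rewrite Rabs_pos_eq in HN; auto.
  apply pow_le; lra.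
Qed.

Lemma geometric_Lim_seq (u : nat -> R) (C : R) :
  (forall n, Rabs (u (S n) - u n) <= C * (/2)^n) ->
  is_lim_seq u (real (Lim_seq u)) /\ forall n, Rabs (real (Lim_seq u) - u n) <= 2 * C * (/2)^n.
Proof.
  intros Hstep.
  assert (Htail : forall n k, Rabs (u (n + k)%nat - u n) <= 2 * C * ((/2)^n - (/2)^(n + k))).
  { intros n k. induction k as [|k IH].
    - rewrite Nat.add_0_r, Rminus_eq_0, Rabs_R0. lra.
    - rewrite Nat.add_succ_r.
      replace (u (S (n + k)) - u n) with ((u (S (n + k)) - u (n + k)%nat) + (u (n + k)%nat - u n)) by ring.
      eapply Rle_trans; [apply Rabs_triang|].
      specialize (Hstep (n + k)%nat). simpl. lra. }
  assert (HC : 0 <= C).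
  { specialize (Hstep O). pose proof (Rabs_pos (u 1%nat - u O)). simpl in Hstep. lra. }
  assert (Hbound : forall n k, Rabs (u (n + k)%nat - u n) <= 2 * C * (/2)^n).
  { intros n k. specialize (Htail n k).
    assert (0 <= (/2)^(n + k)) by (apply pow_le; lra). nra. }
  assert (Hex : ex_finite_lim_seq u).
  { apply ex_lim_seq_cauchy_corr. intros [e He].
    destruct (pow_half_lt (e / (4 * C + 1))) as [N HN]; [apply Rdiv_lt_0_compat; lra|].
    exists N. intros n m Hn Hm. simpl.
    pose proof (Hbound N (n - N)%nat) as Hn'. pose proof (Hbound N (m - N)%nat) as Hm'.
    replace (N + (n - N))%nat with n in Hn' by lia. replace (N + (m - N))%nat with m in Hm' by lia.
    specialize (HN N (le_n N)).
    replace (u n - u m) with ((u n - u N) - (u m - u N)) by ring.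
    eapply Rle_lt_trans; [apply Rabs_triang|]. rewrite Rabs_Ropp.
    assert (4 * C * (/2)^N <= 4 * C * (e / (4 * C + 1))) by (apply Rmult_le_compat_l; lra).
    assert (4 * C * (e / (4 * C + 1)) < e).
    { apply (Rmult_lt_reg_r (4 * C + 1)); [lra|].
      replace (4 * C * (e / (4 * C + 1)) * (4 * C + 1)) with (4 * C * e) by (field; lra). nra. }
    lra. }
  destruct Hex as [l Hl]. rewrite (is_lim_seq_unique _ _ Hl). split; [exact Hl|].
  intros n. simpl.
  assert (Hlim : is_lim_seq (fun k => Rabs (u (n + k)%nat - u n)) (Rabs (l - u n))).
  { apply (is_lim_seq_abs _ (l - u n)). apply (is_lim_seq_minus' _ (fun _ => u n)).
    - apply (is_lim_seq_incr_n _ n) in Hl. apply (is_lim_seq_ext _ _ _ (fun k => f_equal u (Nat.add_comm k n)) Hl).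
    - apply is_lim_seq_const. }
  exact (is_lim_seq_le _ (fun _ => 2 * C * (/2)^n) _ _ (Hbound n) Hlim (is_lim_seq_const _)).
Qed.

Lemma CVU_of_geometric_bound (fn : nat -> R -> R) (f : R -> R) (c : R) (r : posreal) (C : R) :
  0 <= C -> (forall n y, Boule c r y -> Rabs (f y - fn n y) <= C * (/2)^n) -> CVU fn f c r.
Proof.
  intros HC Hb e He. destruct (pow_half_lt (e / (C + 1))) as [N HN].
  { apply Rdiv_lt_0_compat; lra. }
  exists N. intros n y Hn Hy.
  specialize (HN n Hn). specialize (Hb n y Hy).
  assert (C * (/2)^n <= C * (e / (C + 1))) by (apply Rmult_le_compat_l; lra).
  assert (C * (e / (C + 1)) < e).
  { apply (Rmult_lt_reg_r (C + 1)); [lra|].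
    replace (C * (e / (C + 1)) * (C + 1)) with (C * e) by (field; lra). nra. }
  lra.
Qed.

Section Picard.
Variables (G : R -> R -> R) (L a b : R).
Hypothesis HL : 0 <= L.
Hypothesis HG : forall x1 v1 x2 v2,
  Rabs (G x1 v1 - G x2 v2) <= L * (Rabs (x1 - x2) + Rabs (v1 - v2)).

Lemma continuous_lipschitz_comp (x v : R -> R) (t : R) :
  continuous x t -> continuous v t -> continuous (fun s => G (x s) (v s)) t.
Proof.
  intros Hx Hv. apply filterlim_locally. intros [e He].
  set (d := e / (2 * (L + 1))).
  assert (Hd : 0 < d) by (apply Rdiv_lt_0_compat; lra).
  generalize (filter_and _ _ (proj1 (filterlim_locally x (x t)) Hx (mkposreal d Hd))
                             (proj1 (filterlim_locally v (v t)) Hv (mkposreal d Hd))).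
  apply filter_imp. intros s [Bx Bv].
  change (Rabs (x s - x t) < d) in Bx. change (Rabs (v s - v t) < d) in Bv.
  change (Rabs (G (x s) (v s) - G (x t) (v t)) < e).
  eapply Rle_lt_trans; [apply HG|].
  assert (E : 2 * d * (L + 1) = e) by (unfold d; field; lra).
  assert (L * (Rabs (x s - x t) + Rabs (v s - v t)) <= L * (2 * d)) by (apply Rmult_le_compat_l; lra).
  nra.
Qed.

Fixpoint picard (n : nat) : (R -> R) * (R -> R) :=
  match n with
  | O => (fun _ => a, fun _ => b)
  | S n => (fun t => a + RInt (snd (picard n)) 0 t,
            fun t => b + RInt (fun s => G (fst (picard n) s) (snd (picard n) s)) 0 t)
  end.

Let xs n := fst (picard n).
Let vs n := snd (picard n).

Lemma picard_continuous n : (forall t, continuous (xs n) t) /\ (forall t, continuous (vs n) t).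
Proof.
  induction n as [|n [IHx IHv]].
  - split; intros t; apply continuous_const.
  - split; intros t; apply (ex_derive_continuous (V := R_NormedModule)); eexists;
      apply is_derive_plus_RInt; auto.
    intros s. apply continuous_lipschitz_comp; auto.
Qed.

Lemma picard_field_continuous n s : continuous (fun s => G (xs n s) (vs n s)) s.
Proof. destruct (picard_continuous n). apply continuous_lipschitz_comp; auto. Qed.

Lemma picard_derive n t :
  is_derive (xs (S n)) t (vs n t) /\ is_derive (vs (S n)) t (G (xs n t) (vs n t)).
Proof.
  split.
  - apply is_derive_plus_RInt, picard_continuous.
  - apply (is_derive_plus_RInt (fun s => G (xs n s) (vs n s))), picard_field_continuous.
Qed.

Lemma picard_at_0 n : xs n 0 = a /\ vs n 0 = b.
Proof.
  destruct n as [|n]; [split; reflexivity|].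
  unfold xs, vs. simpl. rewrite !RInt_point. unfold zero; simpl. split; ring.
Qed.

Lemma picard_S n t :
  xs (S n) t = a + RInt (vs n) 0 t /\ vs (S n) t = b + RInt (fun s => G (xs n s) (vs n s)) 0 t.
Proof. split; reflexivity. Qed.

Lemma picard_diff n t :
  xs (S (S n)) t - xs (S n) t = RInt (fun s => vs (S n) s - vs n s) 0 t /\
  vs (S (S n)) t - vs (S n) t = RInt (fun s => G (xs (S n) s) (vs (S n) s) - G (xs n s) (vs n s)) 0 t.
Proof.
  destruct (picard_S (S n) t) as [-> ->]. destruct (picard_S n t) as [-> ->].
  split.
  - replace (RInt (fun s => vs (S n) s - vs n s) 0 t) with (minus (RInt (vs (S n)) 0 t) (RInt (vs n) 0 t)).
    + unfold minus, plus, opp; simpl. ring.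
    + symmetry. apply (RInt_minus (V := R_CompleteNormedModule));
        apply ex_RInt_continuous; intros; apply picard_continuous.
  - replace (RInt (fun s => G (xs (S n) s) (vs (S n) s) - G (xs n s) (vs n s)) 0 t)
      with (minus (RInt (fun s => G (xs (S n) s) (vs (S n) s)) 0 t) (RInt (fun s => G (xs n s) (vs n s)) 0 t)).
    + unfold minus, plus, opp; simpl. ring.
    + symmetry. apply (RInt_minus (V := R_CompleteNormedModule));
        apply ex_RInt_continuous; intros; apply picard_field_continuous.
Qed.

(* With the weight [exp (K |t|)] and [K = 2 (1 + L)], each Picard step halves the distance. *)
Let K := 2 * (1 + L).
Let A := (Rabs b + Rabs (G a b)) / K.

Lemma picard_step_bound n t :
  Rabs (xs (S n) t - xs n t) + Rabs (vs (S n) t - vs n t) <= A * exp (K * Rabs t) * (/2)^n.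
Proof.
  assert (HK : 0 < K) by (unfold K; lra).
  assert (HA : 0 <= A) by (apply Rdiv_le_0_compat; [pose proof (Rabs_pos b); pose proof (Rabs_pos (G a b)); lra|lra]).
  revert t. induction n as [|n IH]; intros t.
  - unfold xs, vs. simpl. rewrite !RInt_const. unfold scal; simpl; unfold mult; simpl.
    replace (a + (t - 0) * b - a) with (t * b) by ring.
    replace (b + (t - 0) * G a b - b) with (t * G a b) by ring.
    rewrite !Rabs_mult.
    assert (Rabs t <= exp (K * Rabs t) / K).
    { apply (Rmult_le_reg_r K); auto. replace (exp (K * Rabs t) / K * K) with (exp (K * Rabs t)) by (field; lra).
      pose proof (exp_ineq1_le (K * Rabs t)). lra. }
    unfold A. replace ((Rabs b + Rabs (G a b)) / K * exp (K * Rabs t) * 1)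
      with ((Rabs b + Rabs (G a b)) * (exp (K * Rabs t) / K)) by (field; lra).
    pose proof (Rabs_pos b); pose proof (Rabs_pos (G a b)). nra.
  - destruct (picard_diff n t) as [-> ->].
    assert (Bx : Rabs (RInt (fun s => vs (S n) s - vs n s) 0 t) <= A * (/2)^n / K * exp (K * Rabs t)).
    { apply abs_RInt_le_exp; auto.
      - apply Rmult_le_pos; auto. apply pow_le; lra.
      - intros s. apply (continuous_minus (V := R_NormedModule)); apply picard_continuous.
      - intros s. specialize (IH s). pose proof (Rabs_pos (xs (S n) s - xs n s)). lra. }
    assert (Bv : Rabs (RInt (fun s => G (xs (S n) s) (vs (S n) s) - G (xs n s) (vs n s)) 0 t)
                 <= L * (A * (/2)^n) / K * exp (K * Rabs t)).
    { apply abs_RInt_le_exp; auto.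
      - apply Rmult_le_pos; auto. apply Rmult_le_pos; auto. apply pow_le; lra.
      - intros s. apply (continuous_minus (V := R_NormedModule)); apply picard_field_continuous.
      - intros s. eapply Rle_trans; [apply HG|].
        replace (L * (A * (/ 2) ^ n) * exp (K * Rabs s)) with (L * (A * exp (K * Rabs s) * (/2)^n)) by ring.
        apply Rmult_le_compat_l; auto. }
    replace (A * exp (K * Rabs t) * (/ 2) ^ S n) with
      (A * (/2)^n / K * exp (K * Rabs t) + L * (A * (/2)^n) / K * exp (K * Rabs t))
      by (unfold K; simpl; field; lra).
    lra.
Qed.

Let xl t := real (Lim_seq (fun n => xs n t)).
Let vl t := real (Lim_seq (fun n => vs n t)).

Lemma picard_lim_bound t :
  is_lim_seq (fun n => xs n t) (xl t) /\ is_lim_seq (fun n => vs n t) (vl t) /\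
  forall n, Rabs (xl t - xs n t) + Rabs (vl t - vs n t) <= 4 * A * exp (K * Rabs t) * (/2)^n.
Proof.
  assert (Hstep : forall n, Rabs (xs (S n) t - xs n t) <= A * exp (K * Rabs t) * (/2)^n /\
                            Rabs (vs (S n) t - vs n t) <= A * exp (K * Rabs t) * (/2)^n).
  { intros n. pose proof (picard_step_bound n t).
    pose proof (Rabs_pos (xs (S n) t - xs n t)). pose proof (Rabs_pos (vs (S n) t - vs n t)). lra. }
  destruct (geometric_Lim_seq (fun n => xs n t) _ (fun n => proj1 (Hstep n))) as [Hx Bx].
  destruct (geometric_Lim_seq (fun n => vs n t) _ (fun n => proj2 (Hstep n))) as [Hv Bv].
  split; [exact Hx|]. split; [exact Hv|].
  intros n. specialize (Bx n). specialize (Bv n). unfold xl, vl. lra.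
Qed.

Lemma picard_CVU (c : R) (r : posreal) :
  CVU vs vl c r /\ CVU (fun n y => G (xs n y) (vs n y)) (fun y => G (xl y) (vl y)) c r.
Proof.
  assert (HK : 0 < K) by (unfold K; lra).
  assert (HA : 0 <= A) by (apply Rdiv_le_0_compat; [pose proof (Rabs_pos b); pose proof (Rabs_pos (G a b)); lra|lra]).
  set (C := 4 * A * exp (K * (Rabs c + r))).
  assert (HC : 0 <= C) by (unfold C; pose proof (exp_pos (K * (Rabs c + r))); nra).
  assert (Hb : forall n y, Boule c r y ->
            Rabs (xl y - xs n y) + Rabs (vl y - vs n y) <= C * (/2)^n).
  { intros n y Hy. destruct (picard_lim_bound y) as [_ [_ B]]. eapply Rle_trans; [apply B|].
    assert (exp (K * Rabs y) <= exp (K * (Rabs c + r))).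
    { apply exp_le. apply Rmult_le_compat_l; [lra|].
      unfold Boule in Hy. pose proof (Rabs_triang (y - c) c).
      replace (y - c + c) with y in H by ring. lra. }
    unfold C. apply Rmult_le_compat_r; [apply pow_le; lra|]. apply Rmult_le_compat_l; lra. }
  split.
  - apply (CVU_of_geometric_bound _ _ c r C HC). intros n y Hy. specialize (Hb n y Hy).
    pose proof (Rabs_pos (xl y - xs n y)). lra.
  - apply (CVU_of_geometric_bound _ _ c r (L * C)); [nra|]. intros n y Hy.
    eapply Rle_trans; [apply HG|]. rewrite Rmult_assoc. apply Rmult_le_compat_l; auto.
Qed.

Theorem lipschitz_system_solution : exists x v : R -> R,
  x 0 = a /\ v 0 = b /\ forall t, is_derive x t (v t) /\ is_derive v t (G (x t) (v t)).
Proof.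
  set (r1 := mkposreal 1 Rlt_0_1).
  assert (Hc : forall t, Boule t r1 t) by (intros t; unfold Boule; rewrite Rminus_eq_0, Rabs_R0; simpl; lra).
  assert (Hcont : forall n y, continuity_pt (vs n) y /\ continuity_pt (fun y => G (xs n y) (vs n y)) y).
  { intros n y. split; apply continuity_pt_filterlim; [apply picard_continuous|apply picard_field_continuous]. }
  assert (Hshift : forall y, Un_cv (fun n => xs (S n) y) (xl y) /\ Un_cv (fun n => vs (S n) y) (vl y)).
  { intros y. destruct (picard_lim_bound y) as [Hx [Hv _]].
    split; apply is_lim_seq_Reals, (is_lim_seq_incr_1 (fun n => _ n y)); assumption. }
  exists xl, vl. split; [|split].
  - unfold xl. rewrite (Lim_seq_ext _ (fun _ => a)) by (intros n; apply picard_at_0).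
    rewrite Lim_seq_const. reflexivity.
  - unfold vl. rewrite (Lim_seq_ext _ (fun _ => b)) by (intros n; apply picard_at_0).
    rewrite Lim_seq_const. reflexivity.
  - intros t. split; apply is_derive_Reals.
    + apply (derivable_pt_lim_CVU (fun n => xs (S n)) vs xl vl t t r1 (Hc t)).
      * intros y n _. apply is_derive_Reals, picard_derive.
      * intros y _. apply Hshift.
      * apply picard_CVU.
      * intros y Hy. apply (CVU_continuity vs vl t r1 (proj1 (picard_CVU t r1))); auto.
        intros n z _. apply Hcont.
    + apply (derivable_pt_lim_CVU (fun n => vs (S n)) (fun n y => G (xs n y) (vs n y)) vl
               (fun y => G (xl y) (vl y)) t t r1 (Hc t)).
      * intros y n _. apply is_derive_Reals, picard_derive.
      * intros y _. apply Hshift.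
      * apply picard_CVU.
      * intros y Hy. apply (CVU_continuity _ _ t r1 (proj2 (picard_CVU t r1))); auto.
        intros n z _. apply Hcont.
Qed.

End Picard.

(** * The truncated equation *)

Lemma Rabs_inv_le (m p : R) : 0 < m -> m <= p -> Rabs (/ p) <= / m.
Proof.
  intros Hm Hp. rewrite Rabs_pos_eq by (apply Rlt_le, Rinv_0_lt_compat; lra).
  apply Rinv_le_contravar; lra.
Qed.

Lemma Rabs_mult_le (a b A B : R) : Rabs a <= A -> Rabs b <= B -> Rabs (a * b) <= A * B.
Proof. intros H1 H2. rewrite Rabs_mult. apply Rmult_le_compat; auto; apply Rabs_pos. Qed.

Lemma Rabs_inv_sub_le (m X1 X2 : R) : 0 < m -> m <= X1 -> m <= X2 ->
  Rabs (/ X1 - / X2) <= Rabs (X1 - X2) * / m ^ 2.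
Proof.
  intros Hm H1 H2.
  replace (/ X1 - / X2) with ((X2 - X1) * / (X1 * X2)) by (field; lra).
  apply Rabs_mult_le; [rewrite Rabs_minus_sym; lra|]. apply Rabs_inv_le; nra.
Qed.

Lemma Rabs_inv_pow3_sub_le (m X1 X2 : R) : 0 < m -> m <= X1 -> m <= X2 ->
  Rabs (/ X1 ^ 3 - / X2 ^ 3) <= Rabs (X1 - X2) * (3 / m ^ 4).
Proof.
  intros Hm H1 H2.
  replace (/ X1 ^ 3 - / X2 ^ 3) with
    ((X2 - X1) * (/ (X1 * X2 ^ 3) + / (X1 ^ 2 * X2 ^ 2) + / (X1 ^ 3 * X2))) by (field; lra).
  apply Rabs_mult_le; [rewrite Rabs_minus_sym; lra|].
  assert (m ^ 2 <= X1 ^ 2) by nra. assert (m ^ 2 <= X2 ^ 2) by nra.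
  assert (m ^ 3 <= X1 ^ 3) by nra. assert (m ^ 3 <= X2 ^ 3) by nra.
  assert (A1 : Rabs (/ (X1 * X2 ^ 3)) <= / m ^ 4).
  { apply Rabs_inv_le; [apply pow_lt; lra|].
    replace (m ^ 4) with (m * m ^ 3) by ring. apply Rmult_le_compat; nra. }
  assert (A2 : Rabs (/ (X1 ^ 2 * X2 ^ 2)) <= / m ^ 4).
  { apply Rabs_inv_le; [apply pow_lt; lra|].
    replace (m ^ 4) with (m ^ 2 * m ^ 2) by ring. apply Rmult_le_compat; nra. }
  assert (A3 : Rabs (/ (X1 ^ 3 * X2)) <= / m ^ 4).
  { apply Rabs_inv_le; [apply pow_lt; lra|].
    replace (m ^ 4) with (m ^ 3 * m) by ring. apply Rmult_le_compat; nra. }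
  eapply Rle_trans; [apply Rabs_triang|]. eapply Rle_trans; [apply Rplus_le_compat_r, Rabs_triang|].
  unfold Rdiv. lra.
Qed.

Lemma Rabs_div_sqr_sub_le (m c X1 X2 W1 W2 : R) : 0 < m -> m <= X1 -> m <= X2 -> 0 <= c ->
  Rabs W2 <= c * X2 ->
  Rabs (W1 / X1 ^ 2 - W2 / X2 ^ 2) <= Rabs (W1 - W2) * / m ^ 2 + Rabs (X1 - X2) * (2 * c / m ^ 2).
Proof.
  intros Hm H1 H2 Hc HW.
  replace (W1 / X1 ^ 2 - W2 / X2 ^ 2) with
    ((W1 - W2) * / X1 ^ 2 + (W2 / X2) * ((X2 - X1) * (/ X1 ^ 2 + / (X1 * X2)))) by (field; lra).
  eapply Rle_trans; [apply Rabs_triang|]. apply Rplus_le_compat.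
  - apply Rabs_mult_le; [lra|]. apply Rabs_inv_le; nra.
  - replace (2 * c / m ^ 2) with (c * (/ m ^ 2 + / m ^ 2)) by (field; lra).
    rewrite (Rmult_comm (Rabs (X1 - X2))), Rmult_assoc.
    apply Rabs_mult_le.
    + rewrite Rabs_div, (Rabs_pos_eq X2) by lra.
      apply (Rmult_le_reg_r X2); [lra|]. replace (Rabs W2 / X2 * X2) with (Rabs W2) by (field; lra). lra.
    + rewrite Rmult_comm. apply Rabs_mult_le; [|rewrite Rabs_minus_sym; lra].
      eapply Rle_trans; [apply Rabs_triang|]. apply Rplus_le_compat; apply Rabs_inv_le; nra.
Qed.

Ltac destruct_minmax :=
  let cases := repeat match goal with |- context [Rle_dec ?x ?y] => destruct (Rle_dec x y) end in
  unfold Rmin; cases; unfold Rmax; cases;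
  unfold Rabs; repeat match goal with |- context [Rcase_abs ?x] => destruct (Rcase_abs x) end.

Lemma Rabs_Rmax_sub_le (m x1 x2 : R) : Rabs (Rmax x1 m - Rmax x2 m) <= Rabs (x1 - x2).
Proof. destruct_minmax; lra. Qed.

Definition clamp (c v X : R) := Rmax (- (c * X)) (Rmin v (c * X)).

Lemma clamp_bound (c v X : R) : 0 <= c * X -> Rabs (clamp c v X) <= c * X.
Proof. intros H. unfold clamp. set (a := c * X) in *. destruct_minmax; lra. Qed.

Lemma clamp_lipschitz (c v1 v2 X1 X2 : R) : 0 <= c ->
  Rabs (clamp c v1 X1 - clamp c v2 X2) <= Rabs (v1 - v2) + c * Rabs (X1 - X2).
Proof.
  intros Hc. replace (c * Rabs (X1 - X2)) with (Rabs (c * X1 - c * X2))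
    by (rewrite <- Rmult_minus_distr_l, Rabs_mult, Rabs_pos_eq; lra).
  unfold clamp. set (a1 := c * X1). set (a2 := c * X2). destruct_minmax; lra.
Qed.

Lemma clamp_id (c v X : R) : Rabs v <= c * X -> clamp c v X = v.
Proof.
  intros H. apply Rabs_le_between in H. unfold clamp. set (a := c * X) in *.
  destruct_minmax; lra.
Qed.

Lemma clamp_same_sign (c v X : R) : 0 <= c * X -> 0 <= v * clamp c v X.
Proof. intros H. unfold clamp. set (a := c * X) in *. destruct_minmax; nra. Qed.

Lemma is_derive_piecewise (p q dp dq : R -> R) (m : R) :
  (forall y, m <= y -> is_derive p y (dp y)) -> (forall y, is_derive q y (dq y)) ->
  p m = q m -> dp m = dq m ->
  forall y, is_derive (fun z => if Rle_dec m z then p z else q z) y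
                      (if Rle_dec m y then dp y else dq y).
Proof.
  intros Hp Hq Ep Ed y.
  destruct (Rtotal_order y m) as [Hlt|[->|Hgt]].
  - destruct (Rle_dec m y) as [|_]; [lra|].
    apply (is_derive_ext_loc q); [|apply Hq].
    exists (mkposreal (m - y) ltac:(lra)). intros z Hz.
    change (Rabs (z - y) < m - y) in Hz. apply Rabs_def2 in Hz.
    destruct (Rle_dec m z); [lra|reflexivity].
  - destruct (Rle_dec m m) as [_|]; [|lra].
    apply is_derive_Reals. intros e He.
    destruct (proj1 (is_derive_Reals _ _ _) (Hp m (Rle_refl m)) e He) as [d1 Hd1].
    destruct (proj1 (is_derive_Reals _ _ _) (Hq m) e He) as [d2 Hd2].
    exists (mkposreal (Rmin d1 d2) (Rmin_pos _ _ (cond_pos d1) (cond_pos d2))).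
    intros h Hh Hhd. simpl in Hhd. pose proof (Rmin_l d1 d2). pose proof (Rmin_r d1 d2).
    destruct (Rle_dec m m) as [_|]; [|lra].
    destruct (Rle_dec m (m + h)).
    + apply Hd1; auto. lra.
    + rewrite Ep, Ed. apply Hd2; auto. lra.
  - destruct (Rle_dec m y) as [_|]; [|lra].
    apply (is_derive_ext_loc p); [|apply Hp; lra].
    exists (mkposreal (y - m) ltac:(lra)). intros z Hz.
    change (Rabs (z - y) < y - m) in Hz. apply Rabs_def2 in Hz.
    destruct (Rle_dec m z); [reflexivity|lra].
Qed.

Section Model.
Variables kappa eps nu alpha beta : R.

Definition force (y : R) := 2 * kappa / y + eps ^ 2 / y ^ 3.
Definition potential (y : R) := 2 * kappa * ln y - eps ^ 2 / (2 * y ^ 2).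
Definition ode_rhs (x v : R) := force x - nu * v / x ^ 2.
Definition init_energy := beta ^ 2 / 2 - potential alpha.

(* The energy inequality yields [tau >= tau_min] and [tau'^2 <= speed_coef * tau]. *)
Definition tau_min := exp (- init_energy / (2 * kappa)).
Definition speed_coef := 2 * Rabs init_energy / tau_min + 4 * kappa.
Definition speed_ratio := 1 + speed_coef / tau_min.

(* The right-hand side, made globally Lipschitz by freezing [tau] below [tau_min] and clamping
   [tau'] to the region [|tau'| <= speed_ratio * tau]; it is [ode_rhs] on that region. *)
Definition trunc_rhs (x v : R) :=
  force (Rmax x tau_min) - nu * (clamp speed_ratio v (Rmax x tau_min) / Rmax x tau_min ^ 2).
Definition trunc_lip :=
  2 * kappa / tau_min ^ 2 + 3 * eps ^ 2 / tau_min ^ 4 + nu * (1 + 3 * speed_ratio) / tau_min ^ 2.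

(* The potential of [force (Rmax y tau_min)]: a C^1 extension of [potential] below [tau_min]. *)
Definition potential_trunc (y : R) :=
  if Rle_dec tau_min y then potential y else potential tau_min + (y - tau_min) * force tau_min.

Hypotheses (Hk : 0 < kappa) (Hn : 0 <= nu).

Lemma tau_min_pos : 0 < tau_min.
Proof. apply exp_pos. Qed.

Lemma ln_tau_min : 2 * kappa * ln tau_min = - init_energy.
Proof. unfold tau_min. rewrite ln_exp. field. lra. Qed.

Lemma speed_coef_nonneg : 0 <= speed_coef.
Proof.
  pose proof tau_min_pos. pose proof (Rabs_pos init_energy).
  unfold speed_coef. assert (0 <= 2 * Rabs init_energy / tau_min) by (apply Rdiv_le_0_compat; lra). lra.
Qed.

Lemma speed_ratio_ge1 : 1 <= speed_ratio.
Proof.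
  pose proof tau_min_pos. pose proof speed_coef_nonneg.
  unfold speed_ratio. assert (0 <= speed_coef / tau_min) by (apply Rdiv_le_0_compat; lra). lra.
Qed.

Lemma trunc_lip_nonneg : 0 <= trunc_lip.
Proof.
  pose proof tau_min_pos. pose proof speed_ratio_ge1.
  assert (0 <= 2 * kappa / tau_min ^ 2) by (apply Rdiv_le_0_compat; nra).
  assert (0 <= 3 * eps ^ 2 / tau_min ^ 4) by (apply Rdiv_le_0_compat; [nra|apply pow_lt; lra]).
  assert (0 <= nu * (1 + 3 * speed_ratio) / tau_min ^ 2) by (apply Rdiv_le_0_compat; nra).
  unfold trunc_lip. lra.
Qed.

Lemma force_pos (y : R) : 0 < y -> 0 < force y.
Proof.
  intros Hy. unfold force.
  assert (0 < 2 * kappa / y) by (apply Rdiv_lt_0_compat; lra).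
  assert (0 <= eps ^ 2 / y ^ 3) by (apply Rdiv_le_0_compat; [nra|apply pow_lt; lra]). lra.
Qed.

Lemma is_derive_potential (y : R) : 0 < y -> is_derive potential y (force y).
Proof.
  intros Hy. unfold potential, force. auto_derive.
  - repeat split; auto. apply Rgt_not_eq. nra.
  - field. lra.
Qed.

Lemma potential_le_ln (y : R) : potential y <= 2 * kappa * ln y.
Proof.
  unfold potential. assert (0 <= eps ^ 2 / (2 * y ^ 2)); [|lra].
  destruct (Req_dec y 0) as [->|Hy].
  - replace (2 * 0 ^ 2) with 0 by ring. unfold Rdiv. rewrite Rinv_0, Rmult_0_r. lra.
  - apply Rdiv_le_0_compat; [nra|]. assert (0 < y ^ 2) by (apply pow2_gt_0; auto). lra.
Qed.

Lemma is_derive_potential_trunc (y : R) : is_derive potential_trunc y (force (Rmax y tau_min)).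
Proof.
  pose proof tau_min_pos.
  replace (force (Rmax y tau_min)) with (if Rle_dec tau_min y then force y else force tau_min).
  - apply (is_derive_piecewise potential (fun z => potential tau_min + (z - tau_min) * force tau_min)
             force (fun _ => force tau_min) tau_min).
    + intros z Hz. apply is_derive_potential. lra.
    + intros z. auto_derive; auto. ring.
    + ring.
    + reflexivity.
  - unfold Rmax. destruct (Rle_dec tau_min y), (Rle_dec y tau_min); f_equal; lra.
Qed.

Lemma potential_trunc_below (y : R) : y < tau_min -> potential_trunc y < - init_energy.
Proof.
  intros Hy. pose proof tau_min_pos. unfold potential_trunc.
  destruct (Rle_dec tau_min y) as [|_]; [lra|].
  pose proof (potential_le_ln tau_min). pose proof (force_pos tau_min ltac:(lra)).
  rewrite <- ln_tau_min. nra.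
Qed.

Lemma energy_confinement (x v : R) : 0 < x -> v ^ 2 / 2 - potential x <= init_energy ->
  tau_min <= x /\ v ^ 2 <= speed_coef * x.
Proof.
  intros Hx HE. pose proof tau_min_pos. pose proof (potential_le_ln x). pose proof (pow2_ge_0 v).
  assert (Hm : tau_min <= x).
  { destruct (Rle_dec tau_min x) as [|Hlt]; auto.
    pose proof (ln_increasing x tau_min Hx ltac:(lra)). pose proof ln_tau_min. nra. }
  split; [exact Hm|].
  assert (Hln : ln x <= x - 1) by (pose proof (exp_ineq1_le (ln x)); rewrite exp_ln in *; lra).
  assert (HE0 : init_energy <= Rabs init_energy * (x / tau_min)).
  { assert (1 <= x / tau_min) by (apply (Rmult_le_reg_r tau_min); [lra|]; field_simplify; lra).
    pose proof (Rle_abs init_energy). pose proof (Rabs_pos init_energy). nra. }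
  unfold speed_coef. replace ((2 * Rabs init_energy / tau_min + 4 * kappa) * x)
    with (2 * (Rabs init_energy * (x / tau_min)) + 4 * kappa * x) by (field; lra).
  nra.
Qed.

Lemma speed_le_ratio (x v : R) : tau_min <= x -> v ^ 2 <= speed_coef * x ->
  Rabs v <= speed_ratio * x.
Proof.
  intros Hx Hv. pose proof tau_min_pos. pose proof speed_coef_nonneg. pose proof speed_ratio_ge1.
  assert (Hc : speed_coef * x <= speed_ratio * x ^ 2).
  { unfold speed_ratio. replace ((1 + speed_coef / tau_min) * x ^ 2)
      with (x ^ 2 + speed_coef * x * (x / tau_min)) by (field; lra).
    assert (1 <= x / tau_min) by (apply (Rmult_le_reg_r tau_min); [lra|]; field_simplify; lra).
    assert (0 <= speed_coef * x) by nra. nra. }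
  rewrite <- (Rabs_pos_eq (speed_ratio * x)) by nra.
  apply Rsqr_le_abs_0. unfold Rsqr. nra.
Qed.

Lemma trunc_energy_confinement (x v : R) : v ^ 2 / 2 - potential_trunc x <= init_energy ->
  tau_min <= x /\ v ^ 2 <= speed_coef * x.
Proof.
  intros HE. pose proof tau_min_pos. pose proof (pow2_ge_0 v).
  destruct (Rle_dec tau_min x) as [Hx|Hx].
  - apply energy_confinement; [lra|]. unfold potential_trunc in HE.
    destruct (Rle_dec tau_min x); [exact HE|lra].
  - pose proof (potential_trunc_below x ltac:(lra)). lra.
Qed.

Lemma trunc_rhs_eq (x v : R) : tau_min <= x -> Rabs v <= speed_ratio * x ->
  trunc_rhs x v = ode_rhs x v.
Proof.
  intros Hx Hv. unfold trunc_rhs, ode_rhs. rewrite Rmax_left, clamp_id by auto.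
  pose proof tau_min_pos. field. lra.
Qed.

Lemma trunc_rhs_dissipative (x v : R) : v * (trunc_rhs x v - force (Rmax x tau_min)) <= 0.
Proof.
  pose proof tau_min_pos. pose proof speed_ratio_ge1.
  assert (HX : tau_min <= Rmax x tau_min) by apply Rmax_r.
  unfold trunc_rhs. set (X := Rmax x tau_min) in *.
  assert (Hs : 0 <= v * clamp speed_ratio v X) by (apply clamp_same_sign; nra).
  replace (v * (force X - nu * (clamp speed_ratio v X / X ^ 2) - force X))
    with (- (nu * (v * clamp speed_ratio v X / X ^ 2))) by (field; lra).
  assert (0 <= v * clamp speed_ratio v X / X ^ 2) by (apply Rdiv_le_0_compat; nra).
  nra.
Qed.

Lemma ode_rhs_dissipative (x v : R) : 0 < x -> v * (ode_rhs x v - force x) <= 0.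
Proof.
  intros Hx. unfold ode_rhs.
  replace (v * (force x - nu * v / x ^ 2 - force x)) with (- (nu * (v ^ 2 / x ^ 2))) by (field; lra).
  assert (0 <= v ^ 2 / x ^ 2) by (apply Rdiv_le_0_compat; nra). nra.
Qed.

Lemma force_lipschitz (X1 X2 : R) : tau_min <= X1 -> tau_min <= X2 ->
  Rabs (force X1 - force X2) <= (2 * kappa / tau_min ^ 2 + 3 * eps ^ 2 / tau_min ^ 4) * Rabs (X1 - X2).
Proof.
  intros H1 H2. pose proof tau_min_pos.
  pose proof (Rabs_inv_sub_le _ _ _ tau_min_pos H1 H2) as A.
  pose proof (Rabs_inv_pow3_sub_le _ _ _ tau_min_pos H1 H2) as B.
  unfold force. replace (2 * kappa / X1 + eps ^ 2 / X1 ^ 3 - (2 * kappa / X2 + eps ^ 2 / X2 ^ 3))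
    with (2 * kappa * (/ X1 - / X2) + eps ^ 2 * (/ X1 ^ 3 - / X2 ^ 3)) by (field; lra).
  eapply Rle_trans; [apply Rabs_triang|]. rewrite (Rabs_mult (2 * kappa)), (Rabs_mult (eps ^ 2)),
    (Rabs_pos_eq (2 * kappa)), (Rabs_pos_eq (eps ^ 2)) by nra.
  replace ((2 * kappa / tau_min ^ 2 + 3 * eps ^ 2 / tau_min ^ 4) * Rabs (X1 - X2))
    with (2 * kappa * (Rabs (X1 - X2) * / tau_min ^ 2) + eps ^ 2 * (Rabs (X1 - X2) * (3 / tau_min ^ 4)))
    by (field; lra).
  apply Rplus_le_compat; apply Rmult_le_compat_l; nra.
Qed.

Lemma trunc_rhs_lipschitz (x1 v1 x2 v2 : R) :
  Rabs (trunc_rhs x1 v1 - trunc_rhs x2 v2) <= trunc_lip * (Rabs (x1 - x2) + Rabs (v1 - v2)).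
Proof.
  pose proof tau_min_pos as Hm. pose proof speed_ratio_ge1 as Hc.
  unfold trunc_rhs. set (X1 := Rmax x1 tau_min). set (X2 := Rmax x2 tau_min).
  assert (H1 : tau_min <= X1) by apply Rmax_r. assert (H2 : tau_min <= X2) by apply Rmax_r.
  set (W1 := clamp speed_ratio v1 X1). set (W2 := clamp speed_ratio v2 X2).
  set (dx := Rabs (x1 - x2)). set (dv := Rabs (v1 - v2)).
  assert (HX : Rabs (X1 - X2) <= dx) by apply Rabs_Rmax_sub_le.
  assert (HW : Rabs (W1 - W2) <= dv + speed_ratio * dx).
  { eapply Rle_trans; [apply clamp_lipschitz; lra|]. unfold dv. nra. }
  assert (HW2 : Rabs W2 <= speed_ratio * X2) by (apply clamp_bound; nra).
  pose proof (force_lipschitz X1 X2 H1 H2) as HF.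
  pose proof (Rabs_div_sqr_sub_le _ speed_ratio _ _ W1 _ Hm H1 H2 ltac:(lra) HW2) as HD.
  replace (force X1 - nu * (W1 / X1 ^ 2) - (force X2 - nu * (W2 / X2 ^ 2)))
    with ((force X1 - force X2) + (- nu) * (W1 / X1 ^ 2 - W2 / X2 ^ 2)) by ring.
  eapply Rle_trans; [apply Rabs_triang|]. rewrite Rabs_mult, Rabs_Ropp, (Rabs_pos_eq nu) by lra.
  assert (0 <= dx) by apply Rabs_pos. assert (0 <= dv) by apply Rabs_pos.
  assert (Hinv : 0 < / tau_min ^ 2) by (apply Rinv_0_lt_compat, pow_lt; lra).
  assert (HFc : 0 <= 2 * kappa / tau_min ^ 2 + 3 * eps ^ 2 / tau_min ^ 4).
  { assert (0 <= 2 * kappa / tau_min ^ 2) by (apply Rdiv_le_0_compat; nra).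
    assert (0 <= 3 * eps ^ 2 / tau_min ^ 4) by (apply Rdiv_le_0_compat; [nra|apply pow_lt; lra]). lra. }
  assert (Hdamp : Rabs (W1 / X1 ^ 2 - W2 / X2 ^ 2) <= (dv + 3 * speed_ratio * dx) * / tau_min ^ 2).
  { eapply Rle_trans; [exact HD|].
    replace ((dv + 3 * speed_ratio * dx) * / tau_min ^ 2)
      with ((dv + speed_ratio * dx) * / tau_min ^ 2 + dx * (2 * speed_ratio / tau_min ^ 2)) by (field; lra).
    apply Rplus_le_compat; [apply Rmult_le_compat_r; lra|].
    apply Rmult_le_compat_r; [apply Rdiv_le_0_compat; [lra|apply pow_lt; lra]|exact HX]. }
  assert (HFx : Rabs (force X1 - force X2) <= (2 * kappa / tau_min ^ 2 + 3 * eps ^ 2 / tau_min ^ 4) * dx).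
  { eapply Rle_trans; [exact HF|]. apply Rmult_le_compat_l; assumption. }
  apply Rle_trans with ((2 * kappa / tau_min ^ 2 + 3 * eps ^ 2 / tau_min ^ 4) * dx
                        + nu * ((dv + 3 * speed_ratio * dx) * / tau_min ^ 2)).
  { apply Rplus_le_compat; [exact HFx|apply Rmult_le_compat_l; assumption]. }
  unfold trunc_lip.
  replace ((2 * kappa / tau_min ^ 2 + 3 * eps ^ 2 / tau_min ^ 4 + nu * (1 + 3 * speed_ratio) / tau_min ^ 2) * (dx + dv))
    with ((2 * kappa / tau_min ^ 2 + 3 * eps ^ 2 / tau_min ^ 4) * dx
          + nu * ((dv + 3 * speed_ratio * dx) * / tau_min ^ 2)
          + (2 * kappa / tau_min ^ 2 + 3 * eps ^ 2 / tau_min ^ 4) * dv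
          + nu * / tau_min ^ 2 * (dx + 3 * speed_ratio * dv)) by (field; lra).
  assert (0 <= (2 * kappa / tau_min ^ 2 + 3 * eps ^ 2 / tau_min ^ 4) * dv) by nra.
  assert (0 <= nu * / tau_min ^ 2 * (dx + 3 * speed_ratio * dv))
    by (apply Rmult_le_pos; [nra|]; nra).
  lra.
Qed.

End Model.

(** * Existence and uniqueness *)

Ltac rewrite_Derive :=
  repeat match goal with
  | H : is_derive ?f ?t ?l |- context [Derive (fun y => ?f y) ?t] =>
      replace (Derive (fun y => f y) t) with l by (symmetry; exact (is_derive_unique _ _ _ H))
  end.

Lemma energy_le_of_dissipation (x v g P dP : R -> R) (E0 : R) :
  (forall t, 0 < t -> is_derive x t (v t)) -> (forall t, 0 < t -> is_derive v t (g t)) ->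
  (forall t, 0 < t -> is_derive P (x t) (dP (x t))) ->
  (forall t, 0 < t -> v t * (g t - dP (x t)) <= 0) ->
  filterlim (fun t => v t ^ 2 / 2 - P (x t)) (at_right 0) (locally E0) ->
  forall t, 0 < t -> v t ^ 2 / 2 - P (x t) <= E0.
Proof.
  intros Hx Hv HP Hdiss Hlim.
  apply le_of_decr_right_lim; [|exact Hlim].
  apply (decr_of_derive_nonpos _ (fun t => v t * (g t - dP (x t))) 0); [|exact Hdiss].
  intros t Ht. pose proof (Hx t Ht) as Dx. pose proof (Hv t Ht) as Dv. pose proof (HP t Ht) as DP.
  auto_derive.
  - repeat split; eexists; eauto.
  - rewrite_Derive. field.
Qed.

Lemma lipschitz_cross_terms_le (p q d L : R) : 0 <= L -> Rabs d <= L * (Rabs p + Rabs q) ->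
  2 * p * q + 2 * q * d <= (1 + 3 * L) * (p ^ 2 + q ^ 2).
Proof.
  intros HL Hd.
  assert (2 * p * q <= p ^ 2 + q ^ 2) by (pose proof (pow2_ge_0 (p - q)); nra).
  assert (2 * q * d <= 2 * Rabs q * Rabs d).
  { pose proof (Rle_abs (q * d)) as Hqd. rewrite Rabs_mult in Hqd. lra. }
  assert (2 * Rabs q * Rabs d <= 2 * Rabs q * (L * (Rabs p + Rabs q))).
  { apply Rmult_le_compat_l; auto. pose proof (Rabs_pos q). lra. }
  assert (2 * Rabs p * Rabs q <= p ^ 2 + q ^ 2).
  { rewrite <- (pow2_abs p), <- (pow2_abs q). pose proof (pow2_ge_0 (Rabs p - Rabs q)). nra. }
  assert (L * (Rabs q * Rabs q) = L * q ^ 2) by (rewrite <- (pow2_abs q); ring).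
  assert (L * (2 * Rabs p * Rabs q) <= L * (p ^ 2 + q ^ 2)) by (apply Rmult_le_compat_l; auto).
  assert (0 <= L * p ^ 2) by (apply Rmult_le_pos; [auto|apply pow2_ge_0]).
  nra.
Qed.

(* Gronwall's argument: [|x1 - x2|^2 + |v1 - v2|^2] grows at most like [exp (C t)]. *)
Lemma lipschitz_system_unique (G : R -> R -> R) (L a b : R) (x1 v1 x2 v2 : R -> R) :
  0 <= L -> (forall p1 q1 p2 q2, Rabs (G p1 q1 - G p2 q2) <= L * (Rabs (p1 - p2) + Rabs (q1 - q2))) ->
  (forall t, 0 < t -> is_derive x1 t (v1 t) /\ is_derive v1 t (G (x1 t) (v1 t))) ->
  (forall t, 0 < t -> is_derive x2 t (v2 t) /\ is_derive v2 t (G (x2 t) (v2 t))) ->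
  filterlim x1 (at_right 0) (locally a) -> filterlim v1 (at_right 0) (locally b) ->
  filterlim x2 (at_right 0) (locally a) -> filterlim v2 (at_right 0) (locally b) ->
  forall t, 0 < t -> x1 t = x2 t.
Proof.
  intros HL HG Hs1 Hs2 Hx1 Hv1 Hx2 Hv2.
  set (C := 1 + 3 * L).
  set (w := fun t => ((x1 t - x2 t) ^ 2 + (v1 t - v2 t) ^ 2) * exp (- C * t)).
  assert (Hw0 : filterlim w (at_right 0) (locally 0)).
  { replace 0 with (((a - a) ^ 2 + (b - b) ^ 2) * exp (- C * 0)) at 2 by ring.
    apply filterlim_Rmult; [apply filterlim_Rplus|].
    - apply (filterlim_continuous_comp (fun t => x1 t - x2 t) (fun y => y ^ 2)); [apply filterlim_Rminus; auto|].
      apply (ex_derive_continuous (fun y => y ^ 2)). auto_derive. auto.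
    - apply (filterlim_continuous_comp (fun t => v1 t - v2 t) (fun y => y ^ 2)); [apply filterlim_Rminus; auto|].
      apply (ex_derive_continuous (fun y => y ^ 2)). auto_derive. auto.
    - apply (continuous_at_right (fun t => exp (- C * t))).
      apply (ex_derive_continuous (fun t => exp (- C * t))). auto_derive. auto. }
  assert (Hwdecr : forall s t, 0 < s -> s <= t -> w t <= w s).
  { apply (decr_of_derive_nonpos w (fun t =>
      (2 * (x1 t - x2 t) * (v1 t - v2 t) + 2 * (v1 t - v2 t) * (G (x1 t) (v1 t) - G (x2 t) (v2 t))
       - C * ((x1 t - x2 t) ^ 2 + (v1 t - v2 t) ^ 2)) * exp (- C * t)) 0).
    - intros t Ht. destruct (Hs1 t Ht) as [Dx1 Dv1]. destruct (Hs2 t Ht) as [Dx2 Dv2].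
      unfold w. auto_derive.
      + repeat split; eexists; eauto.
      + rewrite_Derive. ring.
    - intros t _. pose proof (exp_pos (- C * t)).
      pose proof (lipschitz_cross_terms_le (x1 t - x2 t) (v1 t - v2 t)
                    (G (x1 t) (v1 t) - G (x2 t) (v2 t)) L HL (HG _ _ _ _)).
      rewrite <- (Rmult_0_l (exp (- C * t))). apply Rmult_le_compat_r; [lra|]. unfold C. lra. }
  intros t Ht.
  pose proof (le_of_decr_right_lim w 0 Hwdecr Hw0 t Ht) as Hw. unfold w in Hw.
  pose proof (exp_pos (- C * t)).
  pose proof (pow2_ge_0 (x1 t - x2 t)). pose proof (pow2_ge_0 (v1 t - v2 t)).
  assert ((x1 t - x2 t) ^ 2 = 0) by nra. nra.
Qed.

Lemma le_mul_sqrt_of_sqr_le (v x c : R) : 0 < x -> 1 <= c -> v ^ 2 <= c * x -> v <= c * sqrt x.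
Proof.
  intros Hx Hc Hv. pose proof (sqrt_pos x). pose proof (sqrt_sqrt x (Rlt_le _ _ Hx)).
  apply Rsqr_incr_0_var; [|nra]. unfold Rsqr. nra.
Qed.

Section Solutions.
Variables kappa eps nu alpha beta : R.
Hypotheses (Hk : 0 < kappa) (Hn : 0 <= nu) (Ha : 0 < alpha).

Let E0 := init_energy kappa eps alpha beta.
Let m := tau_min kappa eps alpha beta.
Let G := trunc_rhs kappa eps nu alpha beta.

Lemma trunc_solution_confined (x v : R -> R) : x 0 = alpha -> v 0 = beta ->
  (forall t, is_derive x t (v t) /\ is_derive v t (G (x t) (v t))) ->
  forall t, 0 <= t -> m <= x t /\ Rabs (v t) <= speed_ratio kappa eps alpha beta * x t.
Proof.
  intros Hx0 Hv0 Hd.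
  assert (Halpha : m <= alpha).
  { apply (energy_confinement kappa eps alpha beta Hk alpha beta Ha). unfold init_energy. lra. }
  set (E := fun t => v t ^ 2 / 2 - potential_trunc kappa eps alpha beta (x t)).
  assert (HE0 : E 0 = E0).
  { unfold E, potential_trunc. rewrite Hx0, Hv0. fold m.
    destruct (Rle_dec m alpha); [|lra]. reflexivity. }
  assert (HE : forall t, 0 <= t -> E t <= E0).
  { intros t [Ht| <-]; [|lra].
    apply (energy_le_of_dissipation x v (fun t => G (x t) (v t)) (potential_trunc kappa eps alpha beta)
             (fun y => force kappa eps (Rmax y m))); auto.
    - intros s _. apply Hd.
    - intros s _. apply Hd.
    - intros s _. apply is_derive_potential_trunc.
    - intros s _. apply trunc_rhs_dissipative; auto.
    - rewrite <- HE0. apply (continuous_at_right E).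
      apply (ex_derive_continuous E). unfold E. auto_derive.
      repeat split; [exists (G (x 0) (v 0)) | exists (force kappa eps (Rmax (x 0) m)) | exists (v 0)];
        apply Hd || apply is_derive_potential_trunc. }
  intros t Ht. destruct (trunc_energy_confinement kappa eps alpha beta Hk (x t) (v t) (HE t Ht)) as [Hx Hv].
  split; [exact Hx|]. apply speed_le_ratio; auto.
Qed.

Theorem ode_solution_exists : exists tau, ode_solution kappa eps nu alpha beta tau.
Proof.
  assert (Hm : 0 < m) by apply tau_min_pos.
  destruct (lipschitz_system_solution G _ alpha beta (trunc_lip_nonneg kappa eps nu alpha beta Hk Hn)
              (trunc_rhs_lipschitz kappa eps nu alpha beta Hk Hn)) as [x [v [Hx0 [Hv0 Hd]]]].
  pose proof (trunc_solution_confined x v Hx0 Hv0 Hd) as Hregion.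
  assert (HDx : forall t, Derive x t = v t) by (intros t; apply is_derive_unique, Hd).
  exists x. split; [|split; [|split; [|split]]].
  - intros t Ht. pose proof (Hregion t Ht). lra.
  - exact Hx0.
  - rewrite <- Hv0. apply diff_quot_right_of_is_derive, Hd.
  - rewrite <- Hv0. apply (filterlim_ext v); [intros t; symmetry; apply HDx|].
    apply continuous_at_right, (ex_derive_continuous v). eexists. apply Hd.
  - intros t Ht. split; [eexists; apply Hd|]. split.
    + apply (ex_derive_ext v); [intros s; symmetry; apply HDx|]. eexists; apply Hd.
    + rewrite (Derive_ext _ _ _ HDx), (is_derive_unique _ _ _ (proj2 (Hd t))), HDx.
      apply (trunc_rhs_eq kappa eps nu alpha beta); apply Hregion; lra.
Qed.

Section Solution.
Variable tau : R -> R.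
Hypothesis Hsol : ode_solution kappa eps nu alpha beta tau.

Let v := Derive tau.

Lemma solution_pos t : 0 < t -> 0 < tau t.
Proof. intros Ht. apply Hsol. lra. Qed.

Lemma solution_derive t : 0 < t ->
  is_derive tau t (v t) /\ is_derive v t (ode_rhs kappa eps nu (tau t) (v t)).
Proof.
  intros Ht. destruct Hsol as (_ & _ & _ & _ & H). destruct (H t Ht) as (D1 & D2 & E).
  split; [apply Derive_correct, D1|]. unfold v, ode_rhs, force. rewrite <- E. apply Derive_correct, D2.
Qed.

Lemma solution_right_lim :
  filterlim tau (at_right 0) (locally alpha) /\ filterlim v (at_right 0) (locally beta).
Proof.
  destruct Hsol as (_ & H0 & Hq & Hv & _). split; [|exact Hv].
  rewrite <- H0. exact (right_continuous_of_diff_quot tau beta Hq).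
Qed.

Lemma solution_energy t : 0 < t -> v t ^ 2 / 2 - potential kappa eps (tau t) <= E0.
Proof.
  destruct solution_right_lim as [Htau Hv].
  apply (energy_le_of_dissipation tau v (fun t => ode_rhs kappa eps nu (tau t) (v t))
           (potential kappa eps) (force kappa eps)).
  - intros s Hs. apply solution_derive, Hs.
  - intros s Hs. apply solution_derive, Hs.
  - intros s Hs. apply is_derive_potential, solution_pos. lra.
  - intros s Hs. apply (ode_rhs_dissipative kappa eps nu Hn), solution_pos. lra.
  - apply filterlim_Rminus.
    + apply (filterlim_continuous_comp v (fun y => y ^ 2 / 2)); [exact Hv|].
      apply (ex_derive_continuous (fun y => y ^ 2 / 2)). auto_derive. auto.
    + apply (filterlim_continuous_comp tau (potential kappa eps)); [exact Htau|].
      apply (ex_derive_continuous (potential kappa eps)). eexists. apply is_derive_potential, Ha.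
Qed.

Lemma solution_confined t : 0 < t -> m <= tau t /\ v t ^ 2 <= speed_coef kappa eps alpha beta * tau t.
Proof.
  intros Ht. apply energy_confinement; auto; [apply solution_pos; lra|apply solution_energy, Ht].
Qed.

Lemma solution_trunc t : 0 < t ->
  is_derive tau t (v t) /\ is_derive v t (G (tau t) (v t)).
Proof.
  intros Ht. destruct (solution_derive t Ht) as [D1 D2]. split; [exact D1|].
  destruct (solution_confined t Ht) as [Hm Hv].
  unfold G. rewrite trunc_rhs_eq by (auto; apply speed_le_ratio; auto). exact D2.
Qed.

(** * Asymptotics *)

Let damped_speed t := v t - nu / tau t.

(* The friction term [- nu tau' / tau^2] is the derivative of [nu / tau]. *)
Lemma damped_speed_derive t : 0 < t -> is_derive damped_speed t (force kappa eps (tau t)).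
Proof.
  intros Ht. pose proof (solution_pos t Ht). destruct (solution_derive t Ht) as [D1 D2].
  unfold damped_speed. auto_derive.
  - repeat split; try (eexists; eassumption). lra.
  - rewrite_Derive. unfold ode_rhs, force. field. lra.
Qed.

Lemma damped_speed_incr s t : 0 < s -> s <= t -> damped_speed s <= damped_speed t.
Proof.
  apply (incr_of_derive_nonneg _ (fun t => force kappa eps (tau t)) 0).
  - exact damped_speed_derive.
  - intros x Hx. apply Rlt_le, force_pos; auto. apply solution_pos, Hx.
Qed.

(* Bounding [damped_speed] bounds [tau'] by some [V]; then [damped_speed - (2 kappa / V) ln tau]
   is nondecreasing, which bounds [ln tau]. *)
Lemma tau_bounded_of_damped_speed_bounded U : (forall t, 0 < t -> damped_speed t <= U) ->
  exists B, 0 < B /\ forall t, 1 <= t -> tau t <= B.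
Proof.
  intros HU. pose proof (tau_min_pos kappa eps alpha beta) as Hm. fold m in Hm.
  set (V := Rmax (U + nu / m) 1).
  assert (HV1 : 1 <= V) by apply Rmax_r.
  assert (Hv : forall t, 0 < t -> v t <= V).
  { intros t Ht. specialize (HU t Ht). unfold damped_speed in HU.
    destruct (solution_confined t Ht) as [Hr _].
    assert (nu / tau t <= nu / m) by (apply Rmult_le_compat_l; [lra|apply Rinv_le_contravar; lra]).
    pose proof (Rmax_l (U + nu / m) 1). fold V in H0. lra. }
  set (h := fun t => damped_speed t - (2 * kappa / V) * ln (tau t)).
  assert (Hh : forall s t, 0 < s -> s <= t -> h s <= h t).
  { apply (incr_of_derive_nonneg h (fun t => force kappa eps (tau t) - (2 * kappa / V) * (v t / tau t)) 0).
    - intros x Hx. pose proof (solution_pos x Hx). destruct (solution_derive x Hx) as [D1 _].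
      apply (is_derive_minus damped_speed (fun t => 2 * kappa / V * ln (tau t))).
      + apply damped_speed_derive, Hx.
      + auto_derive; [repeat split; auto; eexists; eassumption|]. rewrite_Derive. field. lra.
    - intros x Hx. pose proof (solution_pos x Hx). pose proof (Hv x Hx). unfold force.
      assert (0 <= eps ^ 2 / tau x ^ 3) by (apply Rdiv_le_0_compat; [nra|apply pow_lt; lra]).
      replace (2 * kappa / tau x + eps ^ 2 / tau x ^ 3 - 2 * kappa / V * (v x / tau x))
        with (eps ^ 2 / tau x ^ 3 + (2 * kappa / (V * tau x)) * (V - v x)) by (field; lra).
      assert (0 < 2 * kappa / (V * tau x)) by (apply Rdiv_lt_0_compat; nra). nra. }
  exists (exp ((U - h 1) * V / (2 * kappa))). split; [apply exp_pos|]. intros t Ht.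
  specialize (Hh 1 t ltac:(lra) Ht). specialize (HU t ltac:(lra)). pose proof (solution_pos t ltac:(lra)).
  rewrite <- (exp_ln (tau t)) by lra. apply exp_le.
  apply (Rmult_le_reg_l (2 * kappa / V)); [apply Rdiv_lt_0_compat; lra|].
  replace (2 * kappa / V * ((U - h 1) * V / (2 * kappa))) with (U - h 1) by (field; lra).
  unfold h, damped_speed in *. lra.
Qed.

(* Once [tau <= B], [damped_speed] grows at least linearly, at rate [2 kappa / B]. *)
Lemma damped_speed_unbounded U : exists t, 0 < t /\ U < damped_speed t.
Proof.
  apply NNPP. intros Hno.
  assert (HU : forall t, 0 < t -> damped_speed t <= U).
  { intros t Ht. apply Rnot_lt_le. intros Hlt. apply Hno. exists t. auto. }
  destruct (tau_bounded_of_damped_speed_bounded U HU) as [B [HB0 HB]].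
  set (k := fun t => damped_speed t - (2 * kappa / B) * t).
  assert (Hk' : forall s t, 1 < s -> s <= t -> k s <= k t).
  { apply (incr_of_derive_nonneg k (fun t => force kappa eps (tau t) - 2 * kappa / B) 1).
    - intros x Hx. apply (is_derive_minus damped_speed (fun t => 2 * kappa / B * t)).
      + apply damped_speed_derive. lra.
      + auto_derive; auto. ring.
    - intros x Hx. pose proof (solution_pos x ltac:(lra)). pose proof (HB x ltac:(lra)). unfold force.
      assert (0 <= eps ^ 2 / tau x ^ 3) by (apply Rdiv_le_0_compat; [nra|apply pow_lt; lra]).
      assert (2 * kappa / B <= 2 * kappa / tau x)
        by (apply Rmult_le_compat_l; [lra|apply Rinv_le_contravar; lra]).
      lra. }
  set (t1 := 2 + B * (U - damped_speed 2 + 1) / (2 * kappa)).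
  assert (H2 : damped_speed 2 <= U) by (apply HU; lra).
  assert (Ht1 : 2 <= t1).
  { unfold t1. assert (0 <= B * (U - damped_speed 2 + 1) / (2 * kappa)) by (apply Rdiv_le_0_compat; nra). lra. }
  specialize (Hk' 2 t1 ltac:(lra) Ht1). specialize (HU t1 ltac:(lra)). unfold k in Hk'.
  assert (2 * kappa / B * t1 - 2 * kappa / B * 2 = U - damped_speed 2 + 1) by (unfold t1; field; lra).
  lra.
Qed.

Lemma speed_eventually_ge M : exists T, 0 < T /\ forall t, T <= t -> M <= v t.
Proof.
  destruct (damped_speed_unbounded M) as [T [HT Hu]]. exists T. split; auto.
  intros t Ht. pose proof (damped_speed_incr T t HT Ht). unfold damped_speed in *.
  pose proof (solution_pos t ltac:(lra)).
  assert (0 <= nu / tau t) by (apply Rdiv_le_0_compat; lra). lra.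
Qed.

Lemma tau_lim : is_lim tau p_infty p_infty.
Proof.
  destruct (speed_eventually_ge 1) as [T [HT Hv]].
  apply (is_lim_le_p_loc (fun t => t + (tau (T + 1) - (T + 1)))).
  - exists (T + 1). intros t Ht.
    enough (tau (T + 1) - (T + 1) <= tau t - t) by lra.
    apply (incr_of_derive_nonneg (fun t => tau t - t) (fun t => v t - 1) T); try lra.
    + intros x Hx. apply (is_derive_minus tau (fun t => t)); [apply solution_derive; lra|].
      auto_derive; auto.
    + intros x Hx. specialize (Hv x). lra.
  - eapply is_lim_plus; [apply is_lim_id|apply is_lim_const|]. reflexivity.
Qed.

Lemma speed_le_sqrt t : 0 < t -> v t <= (1 + speed_coef kappa eps alpha beta) * sqrt (tau t).
Proof.
  intros Ht. destruct (solution_confined t Ht) as [_ Hv].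
  pose proof (speed_coef_nonneg kappa eps alpha beta Hk).
  apply le_mul_sqrt_of_sqr_le; [apply solution_pos, Ht|lra|]. pose proof (solution_pos t Ht). nra.
Qed.

(* For [tau' >= 0] the friction loss [nu tau'^2 / tau^2] is at most the decrease of
   [2 nu C / sqrt tau], [C] as in [speed_le_sqrt]; so the energy is eventually bounded below. *)
Lemma energy_eventually_ge : exists h, Rbar_locally p_infty (fun t =>
  0 <= v t /\ h <= v t ^ 2 / 2 - potential kappa eps (tau t)).
Proof.
  destruct (speed_eventually_ge 0) as [T [HT Hv]].
  set (C := 1 + speed_coef kappa eps alpha beta).
  assert (HC : 1 <= C) by (pose proof (speed_coef_nonneg kappa eps alpha beta Hk); unfold C; lra).
  set (H := fun t => v t ^ 2 / 2 - potential kappa eps (tau t) - 2 * nu * C / sqrt (tau t)).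
  assert (Hincr : forall s t, T < s -> s <= t -> H s <= H t).
  { apply (incr_of_derive_nonneg H (fun t => nu * v t / tau t ^ 2 * (C * sqrt (tau t) - v t)) T).
    - intros x Hx. pose proof (solution_pos x ltac:(lra)) as Hp. destruct (solution_derive x ltac:(lra)) as [D1 D2].
      pose proof (is_derive_potential kappa eps (tau x) Hp) as DP.
      pose proof (sqrt_lt_R0 _ Hp) as Hq. pose proof (sqrt_sqrt (tau x) ltac:(lra)) as Hq2.
      unfold H. auto_derive.
      + repeat split; try (eexists; eassumption); lra.
      + rewrite_Derive. unfold ode_rhs, force. set (q := sqrt (tau x)) in *.
        rewrite <- Hq2. field. lra.
    - intros x Hx. pose proof (solution_pos x ltac:(lra)). specialize (Hv x ltac:(lra)).
      pose proof (speed_le_sqrt x ltac:(lra)). fold C in H1.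
      apply Rmult_le_pos; [apply Rdiv_le_0_compat; nra|lra]. }
  exists (H (T + 1)). exists (T + 1). intros t Ht.
  split; [apply Hv; lra|].
  specialize (Hincr (T + 1) t ltac:(lra) ltac:(lra)). unfold H in Hincr.
  pose proof (solution_pos t ltac:(lra)). pose proof (sqrt_lt_R0 _ H0).
  assert (0 <= 2 * nu * C / sqrt (tau t)) by (apply Rdiv_le_0_compat; nra).
  unfold H. lra.
Qed.

Lemma sq_speed_near_log : exists Q, Rbar_locally p_infty (fun t =>
  0 <= v t /\ Rabs (v t ^ 2 - 4 * kappa * ln (tau t)) <= Q).
Proof.
  destruct energy_eventually_ge as [h Hh].
  exists (2 * Rabs E0 + 2 * Rabs h + eps ^ 2 / m ^ 2).
  generalize (filter_and _ _ Hh (eventually_gt 0)). apply filter_imp.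
  intros t [[Hv Hlo] Ht]. split; [exact Hv|].
  pose proof (solution_energy t Ht) as Hup. fold E0 in Hup. pose proof (solution_pos t Ht).
  destruct (solution_confined t Ht) as [Hr _].
  pose proof (tau_min_pos kappa eps alpha beta) as Hm. fold m in Hm.
  assert (A : eps ^ 2 / (2 * tau t ^ 2) <= eps ^ 2 / m ^ 2 / 2).
  { replace (eps ^ 2 / (2 * tau t ^ 2)) with (eps ^ 2 / tau t ^ 2 / 2) by (field; lra).
    apply Rmult_le_compat_r; [lra|]. apply Rmult_le_compat_l; [nra|]. apply Rinv_le_contravar; nra. }
  assert (0 <= eps ^ 2 / (2 * tau t ^ 2)) by (apply Rdiv_le_0_compat; nra).
  unfold potential in *.
  pose proof (Rle_abs E0). pose proof (Rabs_pos E0). pose proof (Rabs_maj2 h). pose proof (Rabs_pos h).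
  apply Rabs_le. split; lra.
Qed.

Let ell t := ln (tau t).

Lemma ell_lim : is_lim ell p_infty p_infty.
Proof.
  apply (is_lim_comp ln tau p_infty p_infty p_infty is_lim_ln_p tau_lim).
  exists 0. intros t _. discriminate.
Qed.

Lemma speed_div_sqrt_ell_lim : is_lim (fun t => v t / (2 * sqrt kappa * sqrt (ell t))) p_infty 1.
Proof.
  destruct sq_speed_near_log as [Q HQ].
  pose proof (eventually_gt_of_is_lim_p_infty ell 0 ell_lim) as Hell.
  pose proof (sqrt_lt_R0 _ Hk) as Hsk. pose proof (sqrt_sqrt _ (Rlt_le _ _ Hk)) as Hsk2.
  set (y := fun t => v t ^ 2 / (4 * kappa * ell t)).
  assert (Hy : is_lim y p_infty 1).
  { apply (is_lim_of_abs_sub_le _ (fun t => Q / (4 * kappa) * / ell t)).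
    - generalize (filter_and _ _ HQ Hell). apply filter_imp. intros t [[_ Hb] Hl].
      replace (Q / (4 * kappa) * / ell t) with (Q * / (4 * kappa * ell t)) by (field; lra).
      unfold y. replace (v t ^ 2 / (4 * kappa * ell t) - 1)
        with ((v t ^ 2 - 4 * kappa * ell t) * / (4 * kappa * ell t)) by (field; lra).
      rewrite Rabs_mult, (Rabs_pos_eq (/ _)) by (apply Rlt_le, Rinv_0_lt_compat; nra).
      apply Rmult_le_compat_r; [apply Rlt_le, Rinv_0_lt_compat; nra|exact Hb].
    - replace (Finite 0) with (Rbar_mult (Q / (4 * kappa)) 0) by (simpl; f_equal; ring).
      apply is_lim_scal_l, is_lim_inv_p_infty, ell_lim. }
  apply (is_lim_ext_loc (fun t => sqrt (y t))).
  - generalize (filter_and _ _ HQ Hell). apply filter_imp. intros t [[Hv _] Hl].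
    pose proof (sqrt_lt_R0 _ Hl). pose proof (sqrt_sqrt _ (Rlt_le _ _ Hl)).
    unfold y. apply sqrt_lem_1; [apply Rdiv_le_0_compat; nra|apply Rdiv_le_0_compat; nra|].
    set (a := sqrt kappa) in *. set (b := sqrt (ell t)) in *.
    rewrite <- Hsk2, <- H0. field. split; lra.
  - rewrite <- sqrt_1. apply (is_lim_comp_continuous y sqrt p_infty 1 Hy).
    apply continuity_pt_filterlim, continuity_pt_sqrt. lra.
Qed.

Lemma tau_div_sqrt_ell_div_t_lim : is_lim (fun t => tau t / sqrt (ell t) / t) p_infty (2 * sqrt kappa).
Proof.
  pose proof (eventually_gt_of_is_lim_p_infty ell 0 ell_lim) as Hell.
  pose proof (sqrt_lt_R0 _ Hk) as Hsk.
  apply (is_lim_div_id_of_derive _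
           (fun t => 2 * sqrt kappa * (v t / (2 * sqrt kappa * sqrt (ell t))) * (1 - / 2 * / ell t))).
  - generalize (filter_and _ _ Hell (eventually_gt 0)). apply filter_imp.
    intros t [Hl Ht]. pose proof (solution_pos t Ht). destruct (solution_derive t Ht) as [D1 _].
    pose proof (sqrt_lt_R0 _ Hl). pose proof (sqrt_sqrt _ (Rlt_le _ _ Hl)) as Hq2.
    unfold ell in *. auto_derive.
    + repeat split; try (eexists; eassumption); lra.
    + rewrite_Derive. set (q := sqrt (ln (tau t))) in *. rewrite <- Hq2. field. repeat split; lra.
  - replace (Finite (2 * sqrt kappa)) with (Finite (2 * sqrt kappa * 1 * (1 - / 2 * 0))) by (f_equal; ring).
    apply is_lim_Rmult; [apply (is_lim_scal_l _ (2 * sqrt kappa) _ 1), speed_div_sqrt_ell_lim|].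
    apply is_lim_minus'; [apply is_lim_const|].
    apply (is_lim_scal_l _ (/ 2) _ 0), is_lim_inv_p_infty, ell_lim.
Qed.

(* [ell = ln (tau / (t sqrt ell)) + ln t + (ln ell) / 2], and the first and last terms are [o(ell)]. *)
Lemma log_div_ell_lim : is_lim (fun t => ln t / ell t) p_infty 1.
Proof.
  pose proof (eventually_gt_of_is_lim_p_infty ell 0 ell_lim) as Hell.
  pose proof (sqrt_lt_R0 _ Hk) as Hsk.
  set (P := fun t => tau t / sqrt (ell t) / t).
  apply (is_lim_ext_loc (fun t => 1 - ln (P t) * / ell t - / 2 * (ln (ell t) / ell t))).
  - generalize (filter_and _ _ Hell (eventually_gt 0)). apply filter_imp.
    intros t [Hl Ht]. pose proof (solution_pos t Ht). pose proof (sqrt_lt_R0 _ Hl).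
    assert (Hsplit : ell t = ln (P t) + ln t + ln (sqrt (ell t)) /\ ln (ell t) = ln (sqrt (ell t)) + ln (sqrt (ell t))).
    { assert (HP : 0 < P t) by (unfold P; apply Rdiv_lt_0_compat; [apply Rdiv_lt_0_compat|]; lra).
      split.
      - rewrite <- !ln_mult by (first [lra | apply Rmult_lt_0_compat; lra]).
        unfold P, ell. f_equal. field. fold (ell t). lra.
      - rewrite <- ln_mult by lra. rewrite sqrt_sqrt by lra. ring. }
    destruct Hsplit as [E1 E2].
    replace (ln t) with (ell t - ln (P t) - ln (sqrt (ell t))) by lra.
    rewrite E2. field. lra.
  - replace (Finite 1) with (Finite (1 - ln (2 * sqrt kappa) * 0 - / 2 * 0)) by (f_equal; ring).
    apply is_lim_minus'; [apply is_lim_minus'; [apply is_lim_const|]|].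
    + apply is_lim_Rmult; [|apply is_lim_inv_p_infty, ell_lim].
      apply (is_lim_comp_continuous P ln p_infty (2 * sqrt kappa) tau_div_sqrt_ell_div_t_lim).
      apply (ex_derive_continuous ln). auto_derive. lra.
    + apply (is_lim_scal_l _ (/ 2) _ 0).
      apply (is_lim_comp (fun y => ln y / y) ell p_infty 0 p_infty is_lim_div_ln_p ell_lim).
      exists 0. intros t _. discriminate.
Qed.

Lemma inv_sqrt_log_div_ell_lim : is_lim (fun t => / sqrt (ln t / ell t)) p_infty 1.
Proof.
  replace (Finite 1) with (Rbar_inv 1) by (simpl; f_equal; apply Rinv_1).
  apply (is_lim_inv _ p_infty 1); [|intros E; injection E; lra].
  rewrite <- sqrt_1. apply (is_lim_comp_continuous _ sqrt p_infty 1 log_div_ell_lim).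
  apply continuity_pt_filterlim, continuity_pt_sqrt. lra.
Qed.

Lemma eventually_log_pos : Rbar_locally p_infty (fun t => 0 < ln t /\ 0 < ell t).
Proof.
  apply filter_and; [|exact (eventually_gt_of_is_lim_p_infty ell 0 ell_lim)].
  exists 1. intros t Ht. rewrite <- ln_1. apply ln_increasing; lra.
Qed.

Theorem tau_asymptotics : is_lim (fun t => tau t / (2 * t * sqrt (kappa * ln t))) p_infty 1.
Proof.
  pose proof (sqrt_lt_R0 _ Hk) as Hsk.
  apply (is_lim_ext_loc (fun t => / (2 * sqrt kappa) * (tau t / sqrt (ell t) / t) * / sqrt (ln t / ell t))).
  - generalize (filter_and _ _ eventually_log_pos (eventually_gt 1)). apply filter_imp.
    intros t [[Hlt Hl] Ht].
    rewrite sqrt_div_alt, sqrt_mult_alt by lra.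
    pose proof (sqrt_lt_R0 _ Hlt). pose proof (sqrt_lt_R0 _ Hl).
    field. repeat split; lra.
  - replace (Finite 1) with (Finite (/ (2 * sqrt kappa) * (2 * sqrt kappa) * 1)) by (f_equal; field; lra).
    apply is_lim_Rmult; [|exact inv_sqrt_log_div_ell_lim].
    apply (is_lim_scal_l _ (/ (2 * sqrt kappa)) _ (2 * sqrt kappa)), tau_div_sqrt_ell_div_t_lim.
Qed.

Theorem speed_asymptotics : is_lim (fun t => Derive tau t / (2 * sqrt (kappa * ln t))) p_infty 1.
Proof.
  pose proof (sqrt_lt_R0 _ Hk) as Hsk.
  apply (is_lim_ext_loc (fun t => v t / (2 * sqrt kappa * sqrt (ell t)) * / sqrt (ln t / ell t))).
  - generalize eventually_log_pos. apply filter_imp. intros t [Hlt Hl].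
    rewrite sqrt_div_alt, sqrt_mult_alt by lra.
    pose proof (sqrt_lt_R0 _ Hlt). pose proof (sqrt_lt_R0 _ Hl).
    unfold v. field. repeat split; lra.
  - replace (Finite 1) with (Finite (1 * 1)) by (f_equal; ring).
    apply is_lim_Rmult; [exact speed_div_sqrt_ell_lim|exact inv_sqrt_log_div_ell_lim].
Qed.

End Solution.

Theorem ode_solution_unique (tau1 tau2 : R -> R) :
  ode_solution kappa eps nu alpha beta tau1 -> ode_solution kappa eps nu alpha beta tau2 ->
  forall t, 0 <= t -> tau1 t = tau2 t.
Proof.
  intros H1 H2 t [Ht| <-].
  - destruct (solution_right_lim tau1 H1). destruct (solution_right_lim tau2 H2).
    apply (lipschitz_system_unique G _ alpha beta tau1 (Derive tau1) tau2 (Derive tau2)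
             (trunc_lip_nonneg kappa eps nu alpha beta Hk Hn) (trunc_rhs_lipschitz kappa eps nu alpha beta Hk Hn));
      auto; apply solution_trunc; auto.
  - destruct H1 as (_ & -> & _), H2 as (_ & -> & _). reflexivity.
Qed.

End Solutions.


Theorem lemma3p2 (alpha kappa beta eps nu : R)
  (Halpha : 0 < alpha) (Hkappa : 0 < kappa) (Heps : 0 <= eps) (Hnu : 0 <= nu) :
  (exists tau : R -> R, ode_solution kappa eps nu alpha beta tau) /\
  (forall tau1 tau2 : R -> R,
     ode_solution kappa eps nu alpha beta tau1 ->
     ode_solution kappa eps nu alpha beta tau2 ->
     forall t, 0 <= t -> tau1 t = tau2 t) /\
  (forall tau : R -> R, ode_solution kappa eps nu alpha beta tau ->
     is_lim (fun t => tau t / (2 * t * sqrt (kappa * ln t))) p_infty 1 /\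
     is_lim (fun t => Derive tau t / (2 * sqrt (kappa * ln t))) p_infty 1).
Proof.
  split; [|split].
  - apply ode_solution_exists; auto.
  - apply ode_solution_unique; auto.
  - intros tau Hsol. split.
    + apply (tau_asymptotics kappa eps nu alpha beta); auto.
    + apply (speed_asymptotics kappa eps nu alpha beta); auto.
Qed.
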